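(* Let $M$ be a matroid, $\psi\colon E(M)\to\Gamma$ a labeling to an abelian group, $F\subseteq\Gamma$ finite, and $\alpha$ a positive integer. If $M$ is $(\alpha,|F|+1)$-weakly base orderable and $M$ has at least one $F$-avoiding basis, then for every basis $B$ of $M$ there exists an $F$-avoiding basis $B^*$ with $|B\setminus B^*|\le\alpha-1$.
   Context: $\psi(S):=\sum_{x\in S}\psi(x)$; a basis $B$ is $F$-avoiding if $\psi(B)\notin F$. For a positive integer $k$, an ordered pair $(B_1,B_2)$ of bases has the $k$-exchange property if there exist pairwise disjoint nonempty $X_1,\dots,X_k\subseteq B_1\setminus B_2$ and pairwise disjoint nonempty $Y_1,\dots,Y_k\subseteq B_2\setminus B_1$ such that $(B_1\setminus\bigcup_{i\in Z}X_i)\cup\bigcup_{i\in Z}Y_i$ is a basis for every $Z\subseteq[k]$. A matroid is $(\alpha,k)$-weakly base orderable if every ordered pair $(B_1,B_2)$ of bases with $|B_1\setminus B_2|\ge\alpha$ has the $k$-exchange property. *)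

From HB Require Import structures.
From mathcomp Require Import all_boot all_order all_algebra.
Set Implicit Arguments. Unset Strict Implicit. Unset Printing Implicit Defensive.
Import GRing.Theory.

Record matroid (E : finType) := Matroid {
  is_base : {set E} -> bool;
  base_nonempty : exists B, is_base B;
  base_exchange : forall B1 B2 x, is_base B1 -> is_base B2 ->
    x \in B1 :\: B2 -> exists2 y, y \in B2 :\: B1 & is_base (y |: (B1 :\ x))
}.

Definition psi_sum (E : finType) (G : zmodType) (psi : E -> G) (S : {set E}) : G :=
  (\sum_(x in S) psi x)%R.

Definition F_avoiding (E : finType) (G : zmodType) (psi : E -> G) (F : seq G)
  (B : {set E}) : Prop := psi_sum psi B \notin F.

Definition k_exchange (E : finType) (M : matroid E) (k : nat)
  (B1 B2 : {set E}) : Prop :=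
  exists (X Y : 'I_k -> {set E}),
    [/\ forall i, X i != set0 /\ X i \subset B1 :\: B2,
        forall i, Y i != set0 /\ Y i \subset B2 :\: B1,
        forall i j, i != j -> [disjoint X i & X j],
        forall i j, i != j -> [disjoint Y i & Y j] &
        forall Z : {set 'I_k},
          is_base M ((B1 :\: \bigcup_(i in Z) X i) :|: \bigcup_(i in Z) Y i)].

Definition weakly_base_orderable (E : finType) (M : matroid E) (alpha k : nat)
  : Prop :=
  forall B1 B2, is_base M B1 -> is_base M B2 ->
    alpha <= #|B1 :\: B2| -> k_exchange M k B1 B2.

(* Among the F-avoiding bases pick one, B0, with |B0 \ B| minimal.  If
   |B0 \ B| >= alpha, weak base orderability gives k = |F| + 1 disjoint
   exchanges X_i -> Y_i from B0 towards B that can be performed in any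
   combination.  Performing the exchanges of a set Z shifts psi(B0) by
   sum_(i in Z) d_i with d_i = psi(Y_i) - psi(X_i), and some nonempty Z avoids
   F: the k + 1 prefix sums psi(B0) + d_0 + ... + d_(j-1) either leave F at
   some j > 0 or two of them coincide, in which case the block between them
   sums to 0.  The resulting F-avoiding basis is strictly closer to B,
   contradicting minimality.  Finally |B \ B0| = |B0 \ B| as all bases have
   the same size. *)

From mathcomp Require Import all_boot all_order all_algebra zify.
Set Implicit Arguments. Unset Strict Implicit. Unset Printing Implicit Defensive.
Import GRing.Theory.
Local Open Scope ring_scope.

Section PsiSum.

Variables (E : finType) (G : zmodType) (psi : E -> G).

Lemma psi_sumU (A C : {set E}) : [disjoint A & C] ->
  psi_sum psi (A :|: C) = psi_sum psi A + psi_sum psi C.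
Proof.
move=> dAC; rewrite /psi_sum -bigU //.
by apply: eq_bigl => x; rewrite !inE.
Qed.

Lemma psi_sumD (A C : {set E}) : C \subset A ->
  psi_sum psi (A :\: C) = psi_sum psi A - psi_sum psi C.
Proof.
move=> sCA; rewrite /psi_sum [X in _ = X - _](big_setID C) (setIidPr sCA).
by rewrite addrC addKr.
Qed.

Lemma psi_sum_bigcup (I : finType) (X : I -> {set E}) (Z : {set I}) :
  (forall i j, i != j -> [disjoint X i & X j]) ->
  psi_sum psi (\bigcup_(i in Z) X i) = \sum_(i in Z) psi_sum psi (X i).
Proof.
move=> disjX; pose XZ i := if i \in Z then X i else set0.
have -> : \bigcup_(i in Z) X i = \bigcup_i XZ i.
  by rewrite big_mkcond.
rewrite /psi_sum partition_disjoint_bigcup => [|i j ij]; last first.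
  rewrite /XZ; case: ifP => _; last by apply: eq_disjoint0 => x; rewrite inE.
  case: ifP => _; first exact: disjX.
  by rewrite disjoint_sym; apply: eq_disjoint0 => x; rewrite inE.
rewrite [RHS]big_mkcond; apply: eq_bigr => i _; rewrite /XZ.
by case: ifP => _ //; rewrite big_set0.
Qed.

End PsiSum.

Lemma shifted_sum_notin (G : zmodType) (F : seq G) (n : nat) (c : G)
  (d : 'I_n -> G) :
  (size F < n)%N -> c \notin F ->
  exists2 Z : {set 'I_n}, Z != set0 & c + \sum_(i in Z) d i \notin F.
Proof.
move=> ltFn cF; pose I (j : 'I_n.+1) := [set l : 'I_n | (l < j)%N].
pose t j := \sum_(l in I j) d l.
suff [i [j [ij tF]]] : exists i j : 'I_n.+1, (i < j)%N /\ c + (t j - t i) \notin F.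
  exists (I j :\: I i).
    apply/set0Pn; exists (Ordinal (leq_trans ij (ltn_ord j))).
    by rewrite !inE /= ij ltnn.
  rewrite -[\sum_(l in _) _]/(psi_sum d _) psi_sumD //.
  by apply/subsetP => l; rewrite !inE => li; apply: ltn_trans li ij.
have t0 : t ord0 = 0 by rewrite /t big1 // => l; rewrite inE.
case: (boolP (injectiveb t)) => [/injectiveP injt | /injectivePn [i [j neq_ij tij]]]; last first.
  have [ij | ji | /val_inj eq_ij] := ltngtP i j; last by rewrite eq_ij eqxx in neq_ij.
  - by exists i, j; rewrite tij subrr addr0.
  - by exists j, i; rewrite tij subrr addr0.
have : ~~ all (mem (c :: F)) (codom (fun j => c + t j)).
  apply/negP => /allP sub.
  have uniq_t : uniq (codom (fun j => c + t j)).
    by rewrite map_inj_uniq ?enum_uniq // => j1 j2 /addrI /injt.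
  by have := uniq_leq_size uniq_t sub; rewrite size_codom card_ord ltnNge ltFn.
case/allPn => _ /codomP [j ->]; rewrite inE negb_or => /andP[neq_c tF].
exists ord0, j; rewrite t0 subr0; split=> //.
rewrite lt0n; apply: contraNneq neq_c => j0.
by rewrite (_ : j = ord0) ?t0 ?addr0 //; apply: val_inj.
Qed.

Section Bases.

Variables (E : finType) (M : matroid E).

Lemma base_subset_eq B1 B2 : is_base M B1 -> is_base M B2 ->
  B1 \subset B2 -> B1 = B2.
Proof.
move=> b1 b2 sB12; apply/eqP; rewrite eqEsubset sB12 -setD_eq0.
apply/set0Pn => -[y yB]; have [z] := base_exchange b2 b1 yB.
by rewrite inE => /andP[/negP zB2 /(subsetP sB12)].
Qed.

Lemma exchange_setD (B1 B2 : {set E}) x y : y \in B2 ->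
  (y |: (B1 :\ x)) :\: B2 = (B1 :\: B2) :\ x.
Proof.
move=> yB2; apply/setP => z; rewrite !inE.
by case: (z =P y) => [-> | _]; rewrite ?yB2 ?andbF //= andbCA.
Qed.

Lemma card_base B1 B2 : is_base M B1 -> is_base M B2 -> #|B1| = #|B2|.
Proof.
move=> b1 b2; move: {2}#|B1 :\: B2| (leqnn #|B1 :\: B2|) => n.
elim: n B1 b1 => [|n IH] B1 b1 leB12.
  by rewrite (base_subset_eq b1 b2) // -setD_eq0 -cards_eq0 -leqn0.
have [|/set0Pn [x xB]] := boolP (B1 :\: B2 == set0).
  by rewrite setD_eq0 => /(base_subset_eq b1 b2) ->.
have [y /setDP [yB2 yB1] b1'] := base_exchange b1 b2 xB.
have xB1 : x \in B1 by case/setDP: xB.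
have le_n : (#|(y |: (B1 :\ x)) :\: B2| <= n)%N.
  by rewrite exchange_setD // -ltnS; rewrite (cardsD1 x) xB in leB12.
rewrite -(IH _ b1' le_n).
by rewrite cardsU1 (cardsD1 x B1) xB1 !inE (negbTE yB1) andbF.
Qed.

Lemma card_setD_base B1 B2 : is_base M B1 -> is_base M B2 ->
  #|B1 :\: B2| = #|B2 :\: B1|.
Proof. by move=> b1 b2; rewrite !cardsD (card_base b1 b2) setIC. Qed.

End Bases.

Section Swap.

Variables (E I : finType) (B1 B2 : {set E}) (X Y : I -> {set E}).
Hypotheses (sXB : forall i, X i \subset B1 :\: B2)
           (sYB : forall i, Y i \subset B2 :\: B1).

Definition swap (Z : {set I}) :=
  (B1 :\: \bigcup_(i in Z) X i) :|: \bigcup_(i in Z) Y i.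

Lemma psi_sum_swap (G : zmodType) (psi : E -> G) (Z : {set I}) :
  (forall i j, i != j -> [disjoint X i & X j]) ->
  (forall i j, i != j -> [disjoint Y i & Y j]) ->
  psi_sum psi (swap Z) =
    psi_sum psi B1 + \sum_(i in Z) (psi_sum psi (Y i) - psi_sum psi (X i)).
Proof.
move=> disjX disjY; rewrite /swap psi_sumU; last first.
  apply: bigcup_disjoint => i _; apply: disjointWl (subsetDl _ _) _.
  apply: disjointWr (sYB i) _; rewrite -setI_eq0; apply/eqP/setP => x.
  by rewrite !inE; case: (x \in B1); rewrite ?andbF.
rewrite psi_sumD; last by apply/bigcupsP => i _; apply: subset_trans (sXB i) (subsetDl _ _).
by rewrite !psi_sum_bigcup // sumrB addrAC addrA.
Qed.

Lemma swap_setD_proper (Z : {set I}) :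
  Z != set0 -> (forall i, X i != set0) -> swap Z :\: B2 \proper B1 :\: B2.
Proof.
case/set0Pn => i Zi /(_ i) /set0Pn [x Xx].
have UY_B2 : \bigcup_(j in Z) Y j \subset B2.
  by apply/bigcupsP => j _; apply: subset_trans (sYB j) (subsetDl _ _).
have x_UX : x \in \bigcup_(j in Z) X j by apply/bigcupP; exists i.
have x_B12 : x \in B1 :\: B2 by apply: subsetP (sXB i) x Xx.
apply: sub_proper_trans (properD1 x_B12).
apply/subsetP => z; rewrite !inE.
case/andP => zB2 /orP [/andP [zUX zB1] | zUY]; last first.
  by rewrite (subsetP UY_B2 z zUY) in zB2.
by rewrite zB1 zB2 !andbT; apply: contraNneq zUX => ->.
Qed.

End Swap.

Lemma avoiding_base_step (E : finType) (M : matroid E) (G : zmodType)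
  (psi : E -> G) (F : seq G) (alpha : nat) (B B1 : {set E}) :
  weakly_base_orderable M alpha (size F).+1 -> is_base M B ->
  is_base M B1 -> F_avoiding psi F B1 -> (alpha <= #|B1 :\: B|)%N ->
  exists2 B2, is_base M B2 /\ F_avoiding psi F B2
            & (#|B2 :\: B| < #|B1 :\: B|)%N.
Proof.
move=> wbo bB b1 av1 le_alpha.
have [X [Y [hX hY disjX disjY swap_base]]] := wbo _ _ b1 bB le_alpha.
have sXB i : X i \subset B1 :\: B by case: (hX i).
have sYB i : Y i \subset B :\: B1 by case: (hY i).
pose d i := psi_sum psi (Y i) - psi_sum psi (X i).
have [Z Z0 avZ] := shifted_sum_notin d (ltnSn _) av1.
exists (swap B1 X Y Z); last first.
  by apply/proper_card/swap_setD_proper => // i; case: (hX i).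
by split; [exact: swap_base | rewrite /F_avoiding (psi_sum_swap sXB sYB)].
Qed.

Local Close Scope ring_scope.

Theorem theorem5p10 (E : finType) (M : matroid E) (G : zmodType)
  (psi : E -> G) (F : seq G) (alpha : nat) :
  uniq F -> 0 < alpha ->
  weakly_base_orderable M alpha (size F).+1 ->
  (exists B, is_base M B /\ F_avoiding psi F B) ->
  forall B, is_base M B ->
    exists Bs, [/\ is_base M Bs, F_avoiding psi F Bs & #|B :\: Bs| <= alpha - 1].
Proof.
move=> _ _ wbo [B0 [b0 av0]] B bB.
pose P Bs := is_base M Bs && (psi_sum psi Bs \notin F).
have P0 : P B0 by apply/andP.
case: (arg_minnP (fun Bs => #|Bs :\: B|) P0) => Bs /andP [bs avs] min_Bs.
exists Bs; split=> //; rewrite (card_setD_base bB bs).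
rewrite leqNgt; apply/negP => lt_alpha.
have le_alpha : alpha <= #|Bs :\: B| by lia.
have [B' [b' av'] lt_B'] := avoiding_base_step wbo bB bs avs le_alpha.
have P' : P B' by apply/andP.
by have := min_Bs B' P'; rewrite leqNgt lt_B'.
Qed.
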